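(* Assume the setting and algorithm described in the context, and that $F$ satisfies the Polyak–Łojasiewicz condition with constant $\mu>0$. If $0<\alpha\le\frac1{2L}$, then for all $k\ge0$, almost surely, $$\mathbb E\big[F(\bar x^{k+1})-F^*\,|\,\mathcal F^k\big]\le(1-\mu\alpha)\big(F(\bar x^k)-F^*\big)+\frac{\alpha L^2}{n}\|x^k-Jx^k\|^2+\frac{\alpha^2L^3}{n}t^k .$$
   Context: Setting. Let $n,m,p\ge1$ be integers and $\mathcal V=\{1,\dots,n\}$. For each $i\in\mathcal V$ and $j\in\{1,\dots,m\}$, $f_{i,j}:\mathbb R^p\to\mathbb R$ is differentiable and $L$-smooth for some $L>0$, i.e. $\|\nabla f_{i,j}(x)-\nabla f_{i,j}(y)\|\le L\|x-y\|$ for all $x,y\in\mathbb R^p$. Let $f_i:=\frac1m\sum_{j=1}^m f_{i,j}$ and $F:=\frac1n\sum_{i=1}^n f_i$, and assume $F^*:=\inf_{x\in\mathbb R^p}F(x)>-\infty$. Let $\underline W=(\underline w_{ir})\in\mathbb R^{n\times n}$ be a nonnegative, primitive, doubly stochastic matrix ($\underline W\mathbf 1_n=\mathbf 1_n$, $\mathbf 1_n^\top\underline W=\mathbf 1_n^\top$), and let $\lambda\in[0,1)$ be its second largest singular value. Any expression with $\lambda$ in a denominator is read as $+\infty$ when $\lambda=0$. Algorithm GT-SAGA with step-size $\alpha>0$: fix a deterministic $\bar x^0\in\mathbb R^p$; for all $i\in\mathcal V$ set $x_i^0=\bar x^0$, $z_{i,j}^0=x_i^0$ for all $j$, $y_i^0=0$,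 $g_i^{-1}=0$. For $k=0,1,2,\dots$ and every $i\in\mathcal V$: draw $\tau_i^k$ uniformly from $\{1,\dots,m\}$; set $g_i^k=\nabla f_{i,\tau_i^k}(x_i^k)-\nabla f_{i,\tau_i^k}(z_{i,\tau_i^k}^k)+\frac1m\sum_{j=1}^m\nabla f_{i,j}(z_{i,j}^k)$; set $y_i^{k+1}=\sum_{r=1}^n\underline w_{ir}(y_r^k+g_r^k-g_r^{k-1})$; set $x_i^{k+1}=\sum_{r=1}^n\underline w_{ir}(x_r^k-\alpha y_r^{k+1})$; draw $s_i^k$ uniformly from $\{1,\dots,m\}$; set $z_{i,j}^{k+1}=x_i^k$ if $j=s_i^k$ and $z_{i,j}^{k+1}=z_{i,j}^k$ otherwise. The family $\{\tau_i^k,s_i^k: i\in\mathcal V,k\ge0\}$ is independent. Notation. $x^k,y^k,g^k\in\mathbb R^{np}$ stack the $x_i^k$, $y_i^k$, $g_i^k$; $\nabla\mathbf f(x^k)\in\mathbb R^{np}$ stacks $\nabla f_i(x_i^k)$, $i=1,\dots,n$; $W=\underline W\otimes I_p$, $J=(\frac1n\mathbf 1_n\mathbf 1_n^\top)\otimes I_p$; $\bar x^k=\frac1n\sum_i x_i^k$, $\bar g^k=\frac1n\sum_i g_i^k$, $\overline{\nabla\mathbf f}(x^k)=\frac1n\sum_i\nabla f_i(x_i^k)$. $\mathcal F^0$ is the trivial $\sigma$-algebra and $\mathcal F^k=\sigma(\{\tau_i^t,s_i^t:i\in\mathcal V,\ t\le k-1\})$ for $k\ge1$. $t^k:=\frac1n\sum_{i=1}^n\frac1m\sum_{j=1}^m\|\bar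 x^k-z_{i,j}^k\|^2$. $\|\nabla\mathbf f(x^0)\|^2:=\sum_{i=1}^n\|\nabla f_i(\bar x^0)\|^2$. Norms are Euclidean (spectral for matrices); vector and matrix inequalities are entrywise. Polyak–Łojasiewicz (PL) condition with constant $\mu>0$: $2\mu(F(x)-F^* )\le\|\nabla F(x)\|^2$ for all $x\in\mathbb R^p$. *)

From HB Require Import structures.
From mathcomp Require Import all_boot all_order all_algebra.
From mathcomp Require Import all_classical all_reals all_analysis.
Set Implicit Arguments. Unset Strict Implicit. Unset Printing Implicit Defensive.
Import Order.TTheory GRing.Theory Num.Theory.
Import numFieldNormedType.Exports.
Local Open Scope ring_scope.

Section GTSAGA.
Variables (R : realType) (n m p : nat).

Notation vec := 'rV[R]_p.

Definition dotv (u v : vec) : R := \sum_(l < p) u 0 l * v 0 l.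
Definition enorm (u : vec) : R := Num.sqrt (dotv u u).

(* One random draw at one iteration: for each node i, the pair (tau_i, s_i),
   each in {1..m} (represented by 'I_m). *)
Definition draw := {ffun 'I_n -> 'I_m * 'I_m}.

(* State of GT-SAGA at iteration k:  x^k, y^k, z^k_{i,j}, and g^{k-1}. *)
Record gt_state := GTState {
  st_x : 'I_n -> vec;
  st_y : 'I_n -> vec;
  st_z : 'I_n -> 'I_m -> vec;
  st_gprev : 'I_n -> vec }.

Variables (W : 'M[R]_n) (alpha : R) (gr : 'I_n -> 'I_m -> vec -> vec) (x0 : vec).

Definition gt_init : gt_state :=
  GTState (fun _ => x0) (fun _ => 0) (fun _ _ => x0) (fun _ => 0).

Definition gt_g (st : gt_state) (c : draw) (i : 'I_n) : vec :=
  let tau := (c i).1 in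
  gr i tau (st_x st i) - gr i tau (st_z st i tau)
  + m%:R^-1 *: \sum_(j < m) gr i j (st_z st i j).

Definition gt_step (st : gt_state) (c : draw) : gt_state :=
  let g := gt_g st c in
  let y' := fun i => \sum_(r < n) W i r *: (st_y st r + g r - st_gprev st r) in
  let x' := fun i => \sum_(r < n) W i r *: (st_x st r - alpha *: y' r) in
  let z' := fun i j => if j == (c i).2 then st_x st i else st_z st i j in
  GTState x' y' z' g.

Fixpoint gt_iter (omega : nat -> draw) (k : nat) : gt_state :=
  match k with
  | 0 => gt_init
  | k'.+1 => gt_step (gt_iter omega k') (omega k')
  end.

Definition xbar (st : gt_state) : vec := n%:R^-1 *: \sum_(i < n) st_x st i.

Definition consensus_err (st : gt_state) : R :=
  \sum_(i < n) enorm (st_x st i - xbar st) ^+ 2.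

Definition t_err (st : gt_state) : R :=
  n%:R^-1 * \sum_(i < n) (m%:R^-1 * \sum_(j < m) enorm (xbar st - st_z st i j) ^+ 2).

End GTSAGA.

(* Sample space of the draws at iterations 0..K-1; by independence and
   uniformity of all tau_i^t, s_i^t it carries the uniform probability. *)
Definition Omega (n m K : nat) := {ffun 'I_K -> draw n m}.

(* A finite history viewed as a draw sequence (values beyond K-1 are never
   used by the quantities considered). *)
Definition hist_seq (n m k : nat) (w : Omega n m k.+1) : nat -> draw n m :=
  fun t => w (inord t).

(* Conditional expectation, w.r.t. the uniform probability on Omega n m K, given
   the sigma-algebra F^k generated by the draws at iterations t < k.  Since this
   sigma-algebra is generated by the finite partition into the atoms
   {w' | w' t = w t for all t < k}, each of positive probability, the conditional
   expectation is the average of X over the atom containing w. *)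
Definition same_past (n m K k : nat) (w w' : Omega n m K) : bool :=
  [forall t : 'I_K, (t < k)%N ==> (w' t == w t)].

Definition condexp (R : realType) (n m K k : nat) (X : Omega n m K -> R)
  (w : Omega n m K) : R :=
  (\sum_(w' | same_past k w w') X w') / #|[pred w' | same_past k w w']|%:R.

Definition has_gradient (R : realType) (p : nat) (f : 'rV[R]_p -> R)
  (gradf : 'rV[R]_p -> 'rV[R]_p) : Prop :=
  forall x, differentiable f x /\ forall h, 'd f x h = dotv (gradf x) h.

Definition L_smooth_grad (R : realType) (p : nat) (L : R)
  (gradf : 'rV[R]_p -> 'rV[R]_p) : Prop :=
  forall x y, enorm (gradf x - gradf y) <= L * enorm (x - y).

Definition primitive_ds (R : realType) (n : nat) (W : 'M[R]_n) : Prop :=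
  (forall i j, 0 <= W i j) /\
  (exists k : nat, (0 < k)%N /\ forall i j, 0 < (W ^+ k) i j) /\
  (forall i, \sum_(r < n) W i r = 1) /\
  (forall r, \sum_(i < n) W i r = 1).

From HB Require Import structures.
From mathcomp Require Import all_boot all_order all_algebra.
From mathcomp Require Import all_classical all_reals all_analysis.
From mathcomp Require Import ring lra.
Import Order.TTheory GRing.Theory Num.Theory.
Import numFieldNormedType.Exports.
Local Open Scope ring_scope.
Set Implicit Arguments. Unset Strict Implicit. Unset Printing Implicit Defensive.

(* The gradient-tracking invariant
   sum_i y_i = sum_i g_i^(k-1) makes the average iterate move as
   xbar^(k+1) = xbar^k - alpha gbar, gbar being the network average of the SAGA
   estimators.  Conditioning on F^k amounts to averaging over the fresh draw,
   which is uniform on {ffun 'I_n -> 'I_m * 'I_m}, so its coordinates are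
   independent.  The descent lemma for F gives
     E F(xbar^(k+1)) <= F(xbar) - alpha <grad F(xbar), E gbar> + L alpha^2/2 E|gbar|^2,
   where E gbar = H is the average of the local gradients and
   E|gbar|^2 = |H|^2 + n^-2 sum_i Var_i.  We conclude with the PL inequality,
   the bias bound |grad F(xbar) - H|^2 <= L^2/n ||x - Jx||^2, the variance bound
   sum_i Var_i <= 2 L^2 (||x - Jx||^2 + n t^k), and alpha L <= 1/2. *)

Section InnerProduct.
Variables (R : realType) (p : nat).
Implicit Types (u v w : 'rV[R]_p) (a c : R).

Lemma dotvC u v : dotv u v = dotv v u.
Proof. by apply: eq_bigr => l _; rewrite mulrC. Qed.

Lemma dotvDl u v w : dotv (u + v) w = dotv u w + dotv v w.
Proof. by rewrite /dotv -big_split; apply: eq_bigr => l _; rewrite mxE mulrDl. Qed.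

Lemma dotvNl u w : dotv (- u) w = - dotv u w.
Proof. by rewrite /dotv -sumrN; apply: eq_bigr => l _; rewrite mxE mulNr. Qed.

Lemma dotvZl a u w : dotv (a *: u) w = a * dotv u w.
Proof. by rewrite /dotv mulr_sumr; apply: eq_bigr => l _; rewrite mxE mulrA. Qed.

Lemma dotvBl u v w : dotv (u - v) w = dotv u w - dotv v w.
Proof. by rewrite dotvDl dotvNl. Qed.

Lemma dotvDr u v w : dotv w (u + v) = dotv w u + dotv w v.
Proof. by rewrite dotvC dotvDl !(dotvC w). Qed.

Lemma dotvBr u v w : dotv w (u - v) = dotv w u - dotv w v.
Proof. by rewrite dotvC dotvBl !(dotvC w). Qed.

Lemma dotvZr a u w : dotv w (a *: u) = a * dotv w u.
Proof. by rewrite dotvC dotvZl dotvC. Qed.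

Lemma dotv0r w : dotv w 0 = 0.
Proof. by rewrite /dotv big1 // => l _; rewrite mxE mulr0. Qed.

Lemma dotv_suml (I : finType) (F : I -> 'rV[R]_p) w :
  dotv (\sum_i F i) w = \sum_i dotv (F i) w.
Proof.
rewrite /dotv exchange_big /=; apply: eq_bigr => l _.
by rewrite summxE mulr_suml.
Qed.

Lemma dotv_sumr (I : finType) (F : I -> 'rV[R]_p) w :
  dotv w (\sum_i F i) = \sum_i dotv w (F i).
Proof. by rewrite dotvC dotv_suml; apply: eq_bigr => i _; rewrite dotvC. Qed.

Lemma dotv_ge0 u : 0 <= dotv u u.
Proof. by apply: sumr_ge0 => l _; rewrite -expr2 sqr_ge0. Qed.

Lemma enorm_sqr u : enorm u ^+ 2 = dotv u u.
Proof. by rewrite /enorm sqr_sqrtr // dotv_ge0. Qed.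

Lemma enorm_le_sqr u v c : 0 <= c -> enorm u <= c * enorm v ->
  dotv u u <= c ^+ 2 * dotv v v.
Proof.
move=> c0 uv; rewrite -!enorm_sqr -exprMn.
by rewrite lerXn2r ?nnegrE ?mulr_ge0 ?sqrtr_ge0.
Qed.

Lemma dotv_sqrD u v : dotv (u + v) (u + v) = dotv u u + 2 * dotv u v + dotv v v.
Proof. rewrite dotvDl !dotvDr (dotvC v u); ring. Qed.

Lemma dotv_sqrB u v : dotv (u - v) (u - v) = dotv u u - 2 * dotv u v + dotv v v.
Proof. rewrite dotvBl !dotvBr (dotvC v u); ring. Qed.

Lemma dotv_sqr_subC u v : dotv (u - v) (u - v) = dotv (v - u) (v - u).
Proof. rewrite !dotv_sqrB (dotvC v u); ring. Qed.

(* Expansions along an affine line u + a v (gbar is the mean plus scaled noise). *)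
Lemma dotv_affr u v w a : dotv w (u + a *: v) = dotv w u + a * dotv w v.
Proof. by rewrite dotvDr dotvZr. Qed.

Lemma dotv_sqr_aff u v a :
  dotv (u + a *: v) (u + a *: v) = dotv u u + 2 * a * dotv u v + a ^+ 2 * dotv v v.
Proof. rewrite dotv_sqrD dotvZl !dotvZr; ring. Qed.

Lemma dotv_young u v c : 2 * c * dotv u v <= dotv u u + c ^+ 2 * dotv v v.
Proof.
have := dotv_ge0 (u - c *: v).
by rewrite dotv_sqrB !dotvZl !dotvZr; lra.
Qed.

Lemma dotv_sqrD_le u v : dotv (u + v) (u + v) <= 2 * dotv u u + 2 * dotv v v.
Proof. have := dotv_young u v 1; rewrite dotv_sqrD expr1n; lra. Qed.

End InnerProduct.

Section DescentLemma.
Variables (R : realType) (p : nat) (f : 'rV[R]_p -> R) (g : 'rV[R]_p -> 'rV[R]_p) (L : R).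
Hypotheses (hg : has_gradient f g) (hL : 0 < L) (hs : L_smooth_grad L g).

Lemma line_derive (x d : 'rV[R]_p) (t : R) :
  is_derive t 1 (fun s : R => f (s *: d + x)) (dotv (g (t *: d + x)) d).
Proof.
have [df dg] := hg (t *: d + x).
have E : (fun h : R => h^-1 *: (((fun s : R => f (s *: d + x)) \o shift t) (h *: 1)
            - f (t *: d + x))) =
         (fun h : R => h^-1 *: ((f \o shift (t *: d + x)) (h *: d) - f (t *: d + x))).
  apply: funext => h /=; congr (_ *: (f _ - _)).
  by rewrite /shift /= [_%:A]mulr1 scalerDl addrA.
split; first by rewrite /derivable E; exact: diff_derivable.
by rewrite /derive E -dg -deriveE.
Qed.

Lemma line_derive_increment (x d : 'rV[R]_p) (t : R) : 0 < t ->
  dotv (g (t *: d + x) - g x) d <= L * t * dotv d d.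
Proof.
move=> t0; set u := g (t *: d + x) - g x.
have Lt0 : 0 < L * t by rewrite mulr_gt0.
have hu : dotv u u <= (L * t) ^+ 2 * dotv d d.
  have := enorm_le_sqr (ltW hL) (hs (t *: d + x) x).
  by rewrite addrK dotvZl dotvZr -/u exprMn [t ^+ 2]expr2 !mulrA.
have young := dotv_young u d (L * t).
rewrite -(ler_pM2l (_ : 0 < 2 * (L * t))) ?mulr_gt0 //; lra.
Qed.

Lemma descent (x d : 'rV[R]_p) :
  f (d + x) <= f x + dotv (g x) d + L / 2 * dotv d d.
Proof.
pose a := dotv (g x) d; pose b := L / 2 * dotv d d.
pose psi := fun s : R => f (s *: d + x) - s * a - s ^+ 2 * b.
have Dpsi t : is_derive t (1:R) psi (dotv (g (t *: d + x)) d - a - (2 * t) * b).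
  have H := line_derive x d t.
  have -> : psi = (fun s : R => f (s *: d + x)) - a *: id - b *: (@id R) ^+ 2.
    by apply: funext => s; rewrite /psi !fctE /=; congr (_ - _ - _); apply: mulrC.
  apply: is_derive_eq.
  change (a%:A) with (a * 1); change ((2 * t ^+ 2.-1)%:A) with ((2 * t ^+ 2.-1) * 1).
  rewrite /= expr1 !mulr1; change (b *: (2 * t)) with (b * (2 * t)); ring.
have psi_nincr : psi 1 <= psi 0.
  have psi_cont : {within `[0, 1], continuous psi}%classic.
    by apply: derivable_within_continuous => t _; have [] := Dpsi t.
  apply: (ler0_derive1_le_cc _ _ psi_cont) => //; rewrite ?in_itv /= ?lexx ?ler01 //.
  move=> t; rewrite in_itv /= => /andP[t0 _].
  rewrite derive1E (@derive_val _ _ _ _ _ _ _ (Dpsi t)).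
  have := line_derive_increment x d t0; rewrite dotvBl /b /a; lra.
move: psi_nincr; rewrite /psi !scale1r scale0r add0r expr1n !mul1r expr0n /= !mul0r !subr0.
rewrite /a /b; lra.
Qed.

End DescentLemma.

Section UniformMean.
Variable R : realType.

Definition mean (T : finType) (F : T -> R) : R := #|T|%:R^-1 * \sum_t F t.

Lemma eq_mean (T : finType) (F G : T -> R) :
  (forall t, F t = G t) -> mean F = mean G.
Proof. by move=> FG; rewrite /mean (eq_bigr _ (fun t _ => FG t)). Qed.

Lemma mean_ord (k : nat) (F : 'I_k -> R) : mean F = k%:R^-1 * \sum_i F i.
Proof. by rewrite /mean card_ord. Qed.

Lemma meanD (T : finType) (F G : T -> R) :
  mean (fun t => F t + G t) = mean F + mean G.
Proof. by rewrite /mean big_split mulrDr. Qed.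

Lemma meanB (T : finType) (F G : T -> R) :
  mean (fun t => F t - G t) = mean F - mean G.
Proof. by rewrite /mean big_split sumrN mulrDr mulrN. Qed.

Lemma meanZ (T : finType) (a : R) (F : T -> R) :
  mean (fun t => a * F t) = a * mean F.
Proof. by rewrite /mean -mulr_sumr mulrCA. Qed.

Lemma mean_sum (T I : finType) (F : I -> T -> R) :
  mean (fun t => \sum_i F i t) = \sum_i mean (F i).
Proof. by rewrite /mean exchange_big mulr_sumr. Qed.

Lemma mean_cst (T : finType) (a : R) : (0 < #|T|)%N -> mean (fun _ : T => a) = a.
Proof.
move=> T0; rewrite /mean sumr_const -[a *+ _]mulr_natr mulrCA mulVf ?mulr1 //.
by rewrite pnatr_eq0 -lt0n.
Qed.

Lemma ler_mean (T : finType) (F G : T -> R) :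
  (forall t, F t <= G t) -> mean F <= mean G.
Proof. by move=> FG; rewrite ler_wpM2l ?invr_ge0 ?ler0n // ler_sum. Qed.

Lemma mean_fst (X Y : finType) (phi : X -> R) : (0 < #|Y|)%N ->
  mean (fun xy : X * Y => phi xy.1) = mean phi.
Proof.
move=> Y0; rewrite /mean -(pair_big xpredT xpredT (fun x _ => phi x)) /= card_prod natrM.
under eq_bigr do rewrite sumr_const -mulr_natl.
by rewrite -mulr_sumr mulrA invfM -(mulrA _ _ #|Y|%:R) mulVf ?mulr1 // pnatr_eq0 -lt0n.
Qed.

Lemma mean_prod (I X : finType) (F : I -> X -> R) :
  mean (fun c : {ffun I -> X} => \prod_t F t (c t)) = \prod_t mean (F t).
Proof.
rewrite /mean -bigA_distr_bigA big_split /= prodr_const card_ffun natrX exprVn.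
by rewrite cardE.
Qed.

Section Coordinates.
Variables (I X : finType).
Hypothesis X0 : (0 < #|X|)%N.

Lemma mean_coord (i : I) (phi : X -> R) :
  mean (fun c : {ffun I -> X} => phi (c i)) = mean phi.
Proof.
pose F t := if t == i then phi else fun _ => 1.
transitivity (mean (fun c : {ffun I -> X} => \prod_t F t (c t))).
  congr mean; apply: funext => c; rewrite (bigD1 i) //= big1 ?mulr1 /F ?eqxx //.
  by move=> t /negbTE ->.
rewrite mean_prod (bigD1 i) //= big1 ?mulr1 /F ?eqxx //.
by move=> t /negbTE ->; apply: mean_cst.
Qed.

Lemma mean_coord2 (i l : I) (a b : X -> R) : i != l ->
  mean (fun c : {ffun I -> X} => a (c i) * b (c l)) = mean a * mean b.
Proof.
move=> il; pose F t := if t == i then a else if t == l then b else fun _ => 1.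
have Fl : F l = b by rewrite /F eq_sym (negbTE il) eqxx.
have Fi : F i = a by rewrite /F eqxx.
have Fo t : t != i -> t != l -> F t = fun _ => 1 by rewrite /F => /negbTE -> /negbTE ->.
transitivity (mean (fun c : {ffun I -> X} => \prod_t F t (c t))).
  congr mean; apply: funext => c.
  rewrite (bigD1 i) //= (bigD1 l) 1?eq_sym //= big1 ?mulr1 ?Fi ?Fl //.
  by move=> t /andP[ti tl]; rewrite Fo.
rewrite mean_prod (bigD1 i) //= (bigD1 l) 1?eq_sym //= big1 ?mulr1 ?Fi ?Fl //.
by move=> t /andP[ti tl]; rewrite Fo // mean_cst.
Qed.

End Coordinates.
End UniformMean.

Section VectorMean.
Variables (R : realType) (p : nat).

Definition vmean (T : finType) (v : T -> 'rV[R]_p) : 'rV[R]_p :=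
  #|T|%:R^-1 *: \sum_t v t.

Lemma vmean_ord (k : nat) (v : 'I_k -> 'rV[R]_p) : vmean v = k%:R^-1 *: \sum_i v i.
Proof. by rewrite /vmean card_ord. Qed.

Lemma dotv_vmeanr (T : finType) (v : T -> 'rV[R]_p) w :
  dotv w (vmean v) = mean (fun t => dotv w (v t)).
Proof. by rewrite /vmean dotvZr dotv_sumr. Qed.

Section Variance.
Variables (T : finType) (v : T -> 'rV[R]_p).
Hypothesis T0 : (0 < #|T|)%N.

Lemma mean_sqr_centered :
  mean (fun t => dotv (v t - vmean v) (v t - vmean v)) =
  mean (fun t => dotv (v t) (v t)) - dotv (vmean v) (vmean v).
Proof.
under eq_mean => t do rewrite dotv_sqrB.
rewrite meanD meanB meanZ mean_cst //.
rewrite (eq_mean (fun t => dotvC (v t) (vmean v))) -dotv_vmeanr; ring.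
Qed.

Lemma mean_sqr_centered_le :
  mean (fun t => dotv (v t - vmean v) (v t - vmean v)) <= mean (fun t => dotv (v t) (v t)).
Proof. by rewrite mean_sqr_centered lerBlDr lerDl dotv_ge0. Qed.

Lemma sqr_vmean_le : dotv (vmean v) (vmean v) <= mean (fun t => dotv (v t) (v t)).
Proof.
rewrite -subr_ge0 -mean_sqr_centered /mean mulr_ge0 ?invr_ge0 ?ler0n //.
by apply: sumr_ge0 => t _; apply: dotv_ge0.
Qed.

End Variance.

Section IndependentSum.
Variables (I X : finType) (e : I -> X -> 'rV[R]_p).
Hypothesis X0 : (0 < #|X|)%N.
Hypothesis e_centered : forall i, \sum_x e i x = 0.

Lemma mean_entry_centered i q : mean (fun x => e i x 0 q) = 0.
Proof. by rewrite /mean -summxE e_centered mxE mulr0. Qed.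

Lemma mean_dotv_centered i w : mean (fun x => dotv w (e i x)) = 0.
Proof. by rewrite -dotv_vmeanr /vmean e_centered scaler0 dotv0r. Qed.

Lemma mean_dotv_indep_sum w :
  mean (fun c : {ffun I -> X} => dotv w (\sum_i e i (c i))) = 0.
Proof.
under eq_mean => c do rewrite dotv_sumr.
rewrite mean_sum big1 // => i _.
by rewrite (mean_coord X0 i (fun x => dotv w (e i x))) mean_dotv_centered.
Qed.

Lemma mean_dotv_indep i l : i != l ->
  mean (fun c : {ffun I -> X} => dotv (e i (c i)) (e l (c l))) = 0.
Proof.
move=> il; rewrite /dotv mean_sum big1 // => q _.
by rewrite (mean_coord2 X0 (fun x => e i x 0 q) (fun x => e l x 0 q)) // mean_entry_centered mul0r.
Qed.

Lemma mean_sqr_indep_sum :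
  mean (fun c : {ffun I -> X} => dotv (\sum_i e i (c i)) (\sum_i e i (c i))) =
  \sum_i mean (fun x => dotv (e i x) (e i x)).
Proof.
under eq_mean => c do rewrite dotv_suml.
rewrite mean_sum; apply: eq_bigr => i _.
under eq_mean => c do rewrite dotv_sumr.
rewrite mean_sum (bigD1 i) //= big1 ?addr0.
  exact: (mean_coord X0 i (fun x => dotv (e i x) (e i x))).
by move=> l li; apply: mean_dotv_indep; rewrite eq_sym.
Qed.

End IndependentSum.
End VectorMean.

Section GradientTracking.
Variables (R : realType) (n m p : nat) (W : 'M[R]_n) (alpha : R)
  (gr : 'I_n -> 'I_m -> 'rV[R]_p -> 'rV[R]_p) (x0 : 'rV[R]_p).
Hypothesis W_colsum : forall r, \sum_(i < n) W i r = 1.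

Lemma sum_mix (v : 'I_n -> 'rV[R]_p) : \sum_i \sum_r W i r *: v r = \sum_r v r.
Proof.
rewrite exchange_big /=; apply: eq_bigr => r _.
by rewrite -scaler_suml W_colsum scale1r.
Qed.

Lemma tracking_invariant omega k :
  \sum_i st_y (gt_iter W alpha gr x0 omega k) i =
  \sum_i st_gprev (gt_iter W alpha gr x0 omega k) i.
Proof.
elim: k => [|k IH] /=; first by rewrite !big1.
by rewrite sum_mix sumrB big_split /= IH addrAC subrr add0r.
Qed.

Lemma xbar_step (st : gt_state R n m p) c :
  \sum_i st_y st i = \sum_i st_gprev st i ->
  xbar (gt_step W alpha gr st c) =
  xbar st - alpha *: (n%:R^-1 *: \sum_i gt_g gr st c i).
Proof.
move=> track; rewrite /xbar /= sum_mix sumrB -scaler_sumr sum_mix.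
rewrite sumrB big_split /= track addrAC subrr add0r.
by rewrite scalerBr !scalerA mulrC.
Qed.

Lemma gt_iter_past omega omega' k : (forall t, (t < k)%N -> omega t = omega' t) ->
  gt_iter W alpha gr x0 omega k = gt_iter W alpha gr x0 omega' k.
Proof.
elim: k => [//|k IH] same /=.
by rewrite IH ?same // => t tk; apply: same; exact: ltnW.
Qed.

End GradientTracking.

Lemma draw_nonempty (n m : nat) : (0 < m)%N -> (0 < #|{: draw n m}|)%N.
Proof. by move=> m0; rewrite card_ffun expn_gt0 card_prod card_ord muln_gt0 m0. Qed.

Section Conditioning.
Variables (n m k : nat).

Lemma hist_past (w w' : Omega n m k.+1) : same_past k w w' ->
  forall t, (t < k)%N -> hist_seq w' t = hist_seq w t.
Proof.
move=> /forallP same t tk; rewrite /hist_seq.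
by have := same (inord t); rewrite inordK ?tk ?(ltn_trans tk) // => /eqP.
Qed.

Lemma hist_last (w : Omega n m k.+1) : hist_seq w k = w ord_max.
Proof. by rewrite /hist_seq; congr (w _); apply: val_inj; rewrite /= inordK. Qed.

Lemma condexp_last (R : realType) (w : Omega n m k.+1) (G : draw n m -> R)
    (X : Omega n m k.+1 -> R) :
  (forall w', same_past k w w' -> X w' = G (w' ord_max)) ->
  condexp k X w = mean G.
Proof.
move=> XG.
pose upd (c : draw n m) : Omega n m k.+1 :=
  [ffun t : 'I_k.+1 => if t == ord_max then c else w t].
pose last (w' : Omega n m k.+1) := w' ord_max.
have updK w' : same_past k w w' -> upd (last w') = w'.
  move=> /forallP same; apply/ffunP => t; rewrite ffunE /last.
  case: eqP => [-> //|/eqP tn].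
  have tk : (t < k)%N.
    by have := ltn_ord t; rewrite ltnS leq_eqVlt => /orP[/eqP e|//];
      case/eqP: tn; apply: val_inj.
  by have := same t; rewrite tk /= => /eqP ->.
have upd_past c : same_past k w (upd c).
  apply/forallP => t; apply/implyP => tk; rewrite ffunE.
  by case: (t =P ord_max) => [e|_ //]; move: tk; rewrite e /= ltnn.
have upd_last c : last (upd c) = c by rewrite /last ffunE eqxx.
have atom c : same_past k w (upd c) && (last (upd c) == c).
  by rewrite upd_past upd_last eqxx.
rewrite /condexp /mean (reindex_onto upd last updK).
have -> : #|[pred w' | same_past k w w']|%:R = \sum_(w' | same_past k w w') (1 : R).
  by rewrite sumr_const.
rewrite (reindex_onto upd last updK) mulrC; congr (_^-1 * _).
  by rewrite (eq_bigl xpredT) ?sumr_const // => c; rewrite atom.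
apply: eq_big => c; first by rewrite atom.
by move=> _; rewrite XG ?upd_past //; congr G; exact: upd_last.
Qed.

End Conditioning.

Section AveragedObjective.
Variables (R : realType) (n m p : nat).
Hypotheses (hn : (0 < n)%N) (hm : (0 < m)%N).
Variables (f : 'I_n -> 'I_m -> 'rV[R]_p -> R) (gr : 'I_n -> 'I_m -> 'rV[R]_p -> 'rV[R]_p).
Variable L : R.
Hypotheses (hL : 0 < L) (hgrad : forall i j, has_gradient (f i j) (gr i j))
  (hsmooth : forall i j, L_smooth_grad L (gr i j)).
Variable Fobj : 'rV[R]_p -> R.
Hypothesis hF : forall x, Fobj x = n%:R^-1 * \sum_(i < n) (m%:R^-1 * \sum_(j < m) f i j x).

Definition gradF (y : 'rV[R]_p) : 'rV[R]_p :=
  n%:R^-1 *: \sum_i (m%:R^-1 *: \sum_j gr i j y).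

Lemma double_mean (F : 'I_n -> 'I_m -> R) :
  n%:R^-1 * \sum_i (m%:R^-1 * \sum_j F i j) = mean (fun i => mean (F i)).
Proof. by rewrite mean_ord; congr (_ * _); apply: eq_bigr => i _; rewrite mean_ord. Qed.

Lemma F_descent (y d : 'rV[R]_p) :
  Fobj (d + y) <= Fobj y + dotv (gradF y) d + L / 2 * dotv d d.
Proof.
have -> : dotv (gradF y) d = mean (fun i => mean (fun j => dotv (gr i j y) d)).
  rewrite -double_mean /gradF dotvZl dotv_suml; congr (_ * _).
  by apply: eq_bigr => i _; rewrite dotvZl dotv_suml.
rewrite !hF !double_mean.
have descent_ij i j := descent (hgrad i j) hL (hsmooth i j) y d.
apply: le_trans (ler_mean (fun i => ler_mean (descent_ij i))) _.
under eq_mean => i do rewrite !meanD mean_cst ?card_ord //.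
by rewrite !meanD mean_cst ?card_ord.
Qed.

Lemma F_step (y g : 'rV[R]_p) (a : R) :
  Fobj (y - a *: g) <= Fobj y - a * dotv (gradF y) g + L / 2 * a ^+ 2 * dotv g g.
Proof.
have := F_descent y (- a *: g); rewrite !dotvZr !dotvZl [- a *: g + y]addrC scaleNr.
have -> : L / 2 * (- a * (- a * dotv g g)) = L / 2 * a ^+ 2 * dotv g g by ring.
by rewrite mulNr.
Qed.

End AveragedObjective.

Section StochasticGradient.
Variables (R : realType) (n m p : nat).
Hypotheses (hn : (0 < n)%N) (hm : (0 < m)%N).
Variables (gr : 'I_n -> 'I_m -> 'rV[R]_p -> 'rV[R]_p) (L : R).
Hypotheses (hL : 0 < L) (hsmooth : forall i j, L_smooth_grad L (gr i j)).
Variable S : gt_state R n m p.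

Definition saga_corr i t := gr i t (st_x S i) - gr i t (st_z S i t).

Definition local_grad i := m%:R^-1 *: \sum_j gr i j (st_x S i).

Definition avg_local_grad := n%:R^-1 *: \sum_i local_grad i.

Definition saga_err i t := saga_corr i t - vmean (saga_corr i).

Definition gbar (c : draw n m) := n%:R^-1 *: \sum_i gt_g gr S c i.

Lemma gt_g_split c i : gt_g gr S c i = local_grad i + saga_err i (c i).1.
Proof.
rewrite /gt_g /saga_err /saga_corr /local_grad vmean_ord sumrB scalerBr.
by rewrite opprB addrCA [_ + (_ - _)]addrCA subrr addr0.
Qed.

(* The error is centered with respect to the draw (tau_i, s_i), whose second
   component is irrelevant to g_i^k. *)
Lemma saga_err_centered i : \sum_(x : 'I_m * 'I_m) saga_err i x.1 = 0.
Proof.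
rewrite -(pair_big xpredT xpredT (fun a _ => saga_err i a)) /=.
under eq_bigr do rewrite sumr_const card_ord.
rewrite sumrMnl; have -> : \sum_a saga_err i a = 0.
  rewrite /saga_err sumrB sumr_const card_ord vmean_ord -scaler_nat scalerA.
  by rewrite mulfV ?scale1r ?subrr // pnatr_eq0 -lt0n.
by rewrite mul0rn.
Qed.

Lemma gbar_split c : gbar c = avg_local_grad + n%:R^-1 *: \sum_i saga_err i (c i).1.
Proof.
rewrite /gbar /avg_local_grad -scalerDr -big_split /=.
by under eq_bigr do rewrite gt_g_split.
Qed.

Let pairs_nonempty : (0 < #|{: 'I_m * 'I_m}|)%N.
Proof. by rewrite card_prod card_ord muln_gt0 hm. Qed.

Lemma mean_gbar_dotv v : mean (fun c => dotv v (gbar c)) = dotv v avg_local_grad.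
Proof.
under eq_mean => c do rewrite gbar_split dotv_affr.
rewrite meanD meanZ (mean_cst _ (draw_nonempty n hm)).
by rewrite (mean_dotv_indep_sum pairs_nonempty saga_err_centered) mulr0 addr0.
Qed.

Lemma mean_gbar_sqr : mean (fun c => dotv (gbar c) (gbar c)) =
  dotv avg_local_grad avg_local_grad +
  n%:R^-2 * \sum_i mean (fun t => dotv (saga_err i t) (saga_err i t)).
Proof.
under eq_mean => c do rewrite gbar_split dotv_sqr_aff.
rewrite !meanD !meanZ (mean_cst _ (draw_nonempty n hm)).
rewrite (mean_dotv_indep_sum pairs_nonempty saga_err_centered) mulr0 addr0.
rewrite (mean_sqr_indep_sum pairs_nonempty saga_err_centered) exprVn.
congr (_ + _ * _); apply: eq_bigr => i _.
by rewrite (mean_fst (fun t => dotv (saga_err i t) (saga_err i t))) ?card_ord.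
Qed.

Lemma smooth_sqr i j x y :
  dotv (gr i j x - gr i j y) (gr i j x - gr i j y) <= L ^+ 2 * dotv (x - y) (x - y).
Proof. exact: enorm_le_sqr (ltW hL) (hsmooth i j x y). Qed.

Lemma saga_var_bound :
  \sum_i mean (fun t => dotv (saga_err i t) (saga_err i t)) <=
  2 * L ^+ 2 * (consensus_err S + n%:R * t_err S).
Proof.
rewrite /consensus_err /t_err [n%:R * _]mulrA mulfV ?mul1r ?pnatr_eq0 -?lt0n //.
rewrite -big_split /= mulr_sumr; apply: ler_sum => i _.
apply: le_trans (mean_sqr_centered_le _ _) _; first by rewrite card_ord.
have corr_le t : dotv (saga_corr i t) (saga_corr i t) <=
    2 * L ^+ 2 * dotv (st_x S i - xbar S) (st_x S i - xbar S)
  + 2 * L ^+ 2 * dotv (xbar S - st_z S i t) (xbar S - st_z S i t).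
  apply: le_trans (smooth_sqr _ _ _ _) _.
  have := dotv_sqrD_le (st_x S i - xbar S) (xbar S - st_z S i t).
  rewrite addrA subrK => H.
  have := ler_wpM2l (sqr_ge0 L) H; lra.
apply: le_trans (ler_mean corr_le) _.
rewrite meanD mean_cst ?card_ord // meanZ mean_ord enorm_sqr.
under [X in _ <= _ * (_ + _ * X)]eq_bigr do rewrite enorm_sqr.
by rewrite mulrDr.
Qed.

Lemma grad_bias_bound :
  dotv (gradF gr (xbar S) - avg_local_grad) (gradF gr (xbar S) - avg_local_grad) <=
  L ^+ 2 / n%:R * consensus_err S.
Proof.
have -> : gradF gr (xbar S) - avg_local_grad =
    vmean (fun i => vmean (fun j => gr i j (xbar S) - gr i j (st_x S i))).
  rewrite /gradF /avg_local_grad vmean_ord -scalerBr -sumrB; congr (_ *: _).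
  by apply: eq_bigr => i _; rewrite /local_grad vmean_ord -scalerBr -sumrB.
apply: le_trans (sqr_vmean_le _ _) _; first by rewrite card_ord.
rewrite mean_ord /consensus_err mulrAC [X in _ <= X]mulrC ler_pM2l ?invr_gt0 ?ltr0n //.
rewrite mulr_sumr; apply: ler_sum => i _.
apply: le_trans (sqr_vmean_le _ _) _; first by rewrite card_ord.
rewrite enorm_sqr -(mean_cst (L ^+ 2 * _) (_ : (0 < #|'I_m|)%N)) ?card_ord //.
by apply: ler_mean => j; rewrite dotv_sqr_subC; exact: smooth_sqr.
Qed.

End StochasticGradient.

Lemma one_step_combination (R : realFieldType) (A0 G2 H2 D GH Q C T a L mu N : R) :
  0 < a -> 0 < L -> a * L <= 1 / 2 -> 1 <= N -> 0 <= C -> 0 <= H2 ->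
  2 * GH = G2 + H2 - D ->
  2 * mu * A0 <= G2 -> D <= L ^+ 2 / N * C -> Q <= 2 * L ^+ 2 * (C + N * T) ->
  A0 - a * GH + L / 2 * a ^+ 2 * (H2 + N^-2 * Q) <=
  (1 - mu * a) * A0 + a * L ^+ 2 / N * C + a ^+ 2 * L ^+ 3 / N * T.
Proof.
move=> a0 L0 aL N1 C0 H0 polar PL bias var; rewrite -exprVn [N^-1 ^+ 2]expr2.
have N0 : 0 < N by apply: lt_le_trans N1; rewrite ltr01.
have a0w := ltW a0; have L0w := ltW L0; have N0w := ltW N0.
have pl_step : a * (2 * mu * A0) <= a * G2 by rewrite ler_pM2l.
have bias_step : a * D <= a * (L ^+ 2 / N * C) by rewrite ler_pM2l.
have aGH : 2 * (a * GH) = a * G2 + a * H2 - a * D by rewrite mulrCA polar; ring.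
have aH0 : 0 <= a * H2 by exact: mulr_ge0.
have curv_step : L * a * (a * H2) <= 1 / 2 * (a * H2).
  by apply: ler_wpM2r; rewrite // mulrC.
have var_step : L / 2 * a ^+ 2 * (N^-1 * N^-1) * Q <=
    L / 2 * a ^+ 2 * (N^-1 * N^-1) * (2 * L ^+ 2 * (C + N * T)).
  by apply: ler_wpM2l => //; rewrite !mulr_ge0 ?invr_ge0 ?exprn_ge0 ?ler0n.
have small_step : (a * L * N^-1) * (a * L ^+ 2 * N^-1 * C) <= 1 / 2 * (a * L ^+ 2 * N^-1 * C).
  apply: ler_wpM2r; first by rewrite !mulr_ge0 ?invr_ge0 ?exprn_ge0.
  by apply: le_trans aL; rewrite ler_piMr ?mulr_ge0 // invf_le1.
have E : L / 2 * a ^+ 2 * (N^-1 * N^-1) * (2 * L ^+ 2 * (C + N * T)) =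
    (a * L * N^-1) * (a * L ^+ 2 * N^-1 * C) + a ^+ 2 * L ^+ 3 / N * T.
  by field; rewrite gt_eqF.
lra.
Qed.

Section ExpectedDescent.
Variables (R : realType) (n m p : nat).
Hypotheses (hn : (0 < n)%N) (hm : (0 < m)%N).
Variables (f : 'I_n -> 'I_m -> 'rV[R]_p -> R) (gr : 'I_n -> 'I_m -> 'rV[R]_p -> 'rV[R]_p).
Variable L : R.
Hypotheses (hL : 0 < L) (hgrad : forall i j, has_gradient (f i j) (gr i j))
  (hsmooth : forall i j, L_smooth_grad L (gr i j)).
Variables (Fobj : 'rV[R]_p -> R) (Fstar mu alpha : R) (W : 'M[R]_n).
Hypothesis hF : forall x, Fobj x = n%:R^-1 * \sum_(i < n) (m%:R^-1 * \sum_(j < m) f i j x).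
Hypothesis hPL : forall x, 2 * mu * (Fobj x - Fstar) <=
  enorm (n%:R^-1 *: \sum_(i < n) (m%:R^-1 *: \sum_(j < m) gr i j x)) ^+ 2.
Hypotheses (halpha0 : 0 < alpha) (halpha1 : alpha <= (2 * L)^-1).
Hypothesis W_colsum : forall r, \sum_(i < n) W i r = 1.

Lemma expected_descent (S : gt_state R n m p) :
  \sum_i st_y S i = \sum_i st_gprev S i ->
  mean (fun c => Fobj (xbar (gt_step W alpha gr S c)) - Fstar) <=
  (1 - mu * alpha) * (Fobj (xbar S) - Fstar)
    + alpha * L ^+ 2 / n%:R * consensus_err S
    + alpha ^+ 2 * L ^+ 3 / n%:R * t_err S.
Proof.
move=> track; set G := gradF gr (xbar S); set H := avg_local_grad gr S.
have step c : Fobj (xbar (gt_step W alpha gr S c)) - Fstar <=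
    (Fobj (xbar S) - Fstar) - alpha * dotv G (gbar gr S c)
    + L / 2 * alpha ^+ 2 * dotv (gbar gr S c) (gbar gr S c).
  rewrite xbar_step //; have := F_step hn hm hL hgrad hsmooth hF (xbar S) (gbar gr S c) alpha.
  rewrite -/G; lra.
apply: le_trans (ler_mean step) _.
rewrite meanD meanB (mean_cst _ (draw_nonempty n hm)) !meanZ (mean_gbar_dotv hm) (mean_gbar_sqr hm).
apply: (one_step_combination (G2 := dotv G G) (D := dotv (G - H) (G - H))) => //.
- apply: le_trans (ler_wpM2r (ltW hL) halpha1) _.
  by rewrite invfM -mulrA mulVf ?gt_eqF // mulr1 div1r.
- by rewrite ler1n.
- by apply: sumr_ge0 => i _; apply: sqr_ge0.
- exact: dotv_ge0.
- by rewrite dotv_sqrB; ring.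
- by have := hPL (xbar S); rewrite enorm_sqr.
- exact: grad_bias_bound.
- exact: saga_var_bound.
Qed.

End ExpectedDescent.

Unset Implicit Arguments.
Set Strict Implicit.

Theorem lemma18 (R : realType) (n m p : nat) (hn : (0 < n)%N) (hm : (0 < m)%N)
  (hp : (0 < p)%N)
  (f : 'I_n -> 'I_m -> 'rV[R]_p -> R) (gr : 'I_n -> 'I_m -> 'rV[R]_p -> 'rV[R]_p)
  (L : R) (hL : 0 < L)
  (hgrad : forall i j, has_gradient (f i j) (gr i j))
  (hsmooth : forall i j, L_smooth_grad L (gr i j))
  (Fobj : 'rV[R]_p -> R)
  (hF : forall x, Fobj x = n%:R^-1 * \sum_(i < n) (m%:R^-1 * \sum_(j < m) f i j x))
  (Fstar : R)
  (hFstar_lb : forall x, Fstar <= Fobj x)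
  (hFstar_inf : forall e, 0 < e -> exists x, Fobj x < Fstar + e)
  (W : 'M[R]_n) (hW : primitive_ds W)
  (mu : R) (hmu : 0 < mu)
  (hPL : forall x, 2 * mu * (Fobj x - Fstar) <=
     enorm (n%:R^-1 *: \sum_(i < n) (m%:R^-1 *: \sum_(j < m) gr i j x)) ^+ 2)
  (alpha : R) (halpha0 : 0 < alpha) (halpha1 : alpha <= (2 * L)^-1)
  (x0 : 'rV[R]_p) (k : nat) (w : Omega n m k.+1) :
  let st := fun (w' : Omega n m k.+1) (t : nat) =>
              gt_iter W alpha gr x0 (hist_seq w') t in
  condexp k (fun w' => Fobj (xbar (st w' k.+1)) - Fstar) w <=
    (1 - mu * alpha) * (Fobj (xbar (st w k)) - Fstar)
    + alpha * L ^+ 2 / n%:R * consensus_err (st w k)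
    + alpha ^+ 2 * L ^+ 3 / n%:R * t_err (st w k).
Proof.
cbv zeta beta; have [_ [_ [_ W_colsum]]] := hW.
set S := gt_iter W alpha gr x0 (hist_seq w) k.
rewrite (condexp_last (G := fun c => Fobj (xbar (gt_step W alpha gr S c)) - Fstar)).
  apply: (expected_descent hn hm hL hgrad hsmooth hF hPL halpha0 halpha1 W_colsum).
  exact: tracking_invariant.
move=> w' same; rewrite /= hist_last /S.
congr (Fobj (xbar (gt_step _ _ _ _ _)) - _).
by apply: gt_iter_past => t tk; rewrite (hist_past same).
Qed.
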